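(* For every $n\ge 10$ there exist a set $S$ of pairwise non-isomorphic graphs, each with at most $n$ vertices, a concept $c:S\to\{0,1\}$, and a graph $F$ such that, with $\mathcal{F}=\{F\}$: (1) the graphs in $S$ are pairwise distinguished by $1$-WL after one round; (2) for every $T\ge 0$, the sample $\{(\overline{\phi^{(T)}_{\mathsf{WL}}}(G),c(G)):G\in S\}$ is not linearly separable; (3) for every $T\ge 0$, the sample $\{(\overline{\phi^{(T)}_{\mathsf{WL},\mathcal{F}}}(G),c(G)):G\in S\}$ is linearly separable. Moreover, (2) and (3) also hold with the unnormalised feature vectors $\phi^{(T)}_{\mathsf{WL}}$ and $\phi^{(T)}_{\mathsf{WL},\mathcal{F}}$.
   Context: Graphs are finite, simple, undirected, unlabeled. $1$-WL: $C^1_0$ constant, $C^1_t(v)=\mathsf{RELABEL}(C^1_{t-1}(v),\{\!\{C^1_{t-1}(u):u\in N(v)\}\!\})$ with a fixed injective $\mathsf{RELABEL}$ shared by all graphs; $1$-WL distinguishes two graphs after one round if for some round $s\le1$ some colour occurs a different number of times in them. $1$-WL$_{\mathcal{F}}$: same update with initial colour $(\ell_F(v))_{F\in\mathcal{F}}$, where $\ell_F(v)=1$ if $v$ lies in a vertex set $X$ with induced subgraph $G[X]$ isomorphic to $F$, else $0$. $\phi_t(G)$ (resp. $\phi_{\mathcal{F},t}(G)$) counts the vertices of $G$ of each colour occurring at round $t$ among the graphs of $S$; $\phi^{(T)}_{\mathsf{WL}}(G)=[\phi_0(G),\dots,\phi_T(G)]$, $\phi^{(T)}_{\mathsf{WL},\mathcal{F}}(G)=[\phi_{\mathcal{F},0}(G),\dots,\phi_{\mathcal{F},T}(G)]$;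 a bar denotes normalisation to unit Euclidean norm. A labelled set of vectors is linearly separable if there are $\mathbf{w},b$ with $\mathbf{w}^\top\mathbf{x}+b>0$ for label $1$ and $<0$ for label $0$. *)

From HB Require Import structures.
From mathcomp Require Import all_boot all_order all_algebra.
From mathcomp Require Import reals.
Set Implicit Arguments. Unset Strict Implicit. Unset Printing Implicit Defensive.
Import Order.TTheory GRing.Theory Num.Theory.

Record graph := Graph {
  gn : nat;
  gadj : rel 'I_gn;
  gsym : symmetric gadj;
  girr : irreflexive gadj }.
Arguments gadj : clear implicits.

Definition iso (G H : graph) : Prop :=
  exists f : 'I_(gn G) -> 'I_(gn H),
    bijective f /\ forall a b, gadj G a b = gadj H (f a) (f b).

(* l_F(v) = 1 iff v lies in a vertex set X with G[X] isomorphic to F,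
   i.e. iff there is an embedding of F onto an induced subgraph of G
   whose image contains v. *)
Definition ellF (F G : graph) (v : 'I_(gn G)) : bool :=
  [exists f : {ffun 'I_(gn F) -> 'I_(gn G)},
     [&& injectiveb f, v \in codom f &
         [forall a, forall b, gadj F a b == gadj G (f a) (f b)]]].
Arguments ellF : clear implicits.

Definition nbrs (G : graph) (v : 'I_(gn G)) : seq 'I_(gn G) :=
  [seq u <- enum 'I_(gn G) | gadj G v u].

Definition init_col := forall G : graph, 'I_(gn G) -> nat.

Definition init_WL : init_col := fun _ _ => 0%N.

Definition init_WLF (Fs : seq graph) : init_col :=
  fun G v => pickle [seq ellF F G v | F <- Fs].

(* 1-WL colour refinement.  RELABEL is the fixed injective map
   (c, multiset M) |-> pickle (c, sorted list of M), shared by all graphs. *)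
Fixpoint wlcol (init : init_col) (G : graph) (t : nat) : 'I_(gn G) -> nat :=
  match t with
  | 0 => init G
  | t'.+1 => fun v =>
      pickle (@wlcol init G t' v,
              sort leq [seq @wlcol init G t' u | u <- nbrs v])
  end.
Arguments wlcol : clear implicits.

Definition cnt (init : init_col) (G : graph) (t col : nat) : nat :=
  #|[pred v : 'I_(gn G) | wlcol init G t v == col]|.

Definition wl_dist1 (G H : graph) : Prop :=
  exists s col, (s <= 1)%N /\ cnt init_WL G s col <> cnt init_WL H s col.

Definition colors (init : init_col) (S : seq graph) (t : nat) : seq nat :=
  undup (flatten [seq [seq wlcol init G t v | v <- enum 'I_(gn G)] | G <- S]).

Section Features.
Variable R : realType.
Local Open Scope ring_scope.

Definition phi (init : init_col) (S : seq graph) (t : nat) (G : graph) : seq R :=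
  [seq (cnt init G t col)%:R | col <- colors init S t].

Definition phiT (init : init_col) (S : seq graph) (T : nat) (G : graph) : seq R :=
  flatten [seq phi init S t G | t <- iota 0 T.+1].

Definition enorm (x : seq R) : R := Num.sqrt (\sum_(a <- x) a ^+ 2).

Definition normalize (x : seq R) : seq R := [seq a / enorm x | a <- x].

Definition dot (w x : seq R) : R := \sum_(i < size x) w`_i * x`_i.

Definition linsep (X : seq (seq R * bool)) : Prop :=
  exists (w : seq R) (b : R), forall p, p \in X ->
    if p.2 then 0 < dot w p.1 + b else dot w p.1 + b < 0.

Definition sample (feat : graph -> seq R) (S : seq graph) (c : graph -> bool)
  : seq (seq R * bool) := [seq (feat G, c G) | G <- S].

End Features.

From HB Require Import structures.
From mathcomp Require Import all_boot all_order all_algebra.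
From mathcomp Require Import reals.
From mathcomp Require Import lra zify.
Set Implicit Arguments. Unset Strict Implicit. Unset Printing Implicit Defensive.
Import Order.TTheory GRing.Theory Num.Theory.

(* Take S = {K3, C4, 2K3}, labelled by "contains a triangle".  All three
   graphs are 2-regular, so plain 1-WL colours every vertex of every graph
   alike at each round: the feature vector of G is |V(G)| times the all-ones
   vector.  Along that ray the labels read 1, 0, 1 at 3 < 4 < 6, which no
   affine function separates, and after normalisation K3 and C4 even have the
   same features.  With F = K3 the initial colours record whether a vertex
   lies on a triangle, and the number of vertices on no triangle (0 for the
   positive graphs, 4 for C4) is a coordinate that separates the labels. *)

Implicit Types (G H : graph) (S : seq graph) (init : init_col).

Definition monochrome init t x G := [forall v : 'I_(gn G), wlcol init G t v == x].

Definition regular G d := forall v : 'I_(gn G), size (nbrs v) = d.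

Fixpoint regular_col (c0 d t : nat) : nat :=
  if t is t'.+1 then pickle (regular_col c0 d t', nseq d (regular_col c0 d t'))
  else c0.

Lemma monochrome_regular init G c0 d t :
  regular G d -> (forall v, init G v = c0) -> monochrome init t (regular_col c0 d t) G.
Proof.
move=> Gd init_c0; apply/forallP; elim: t => [|t IH] v /=; first by rewrite init_c0.
set x := regular_col c0 d t.
have -> : [seq wlcol init G t u | u <- nbrs v] = nseq d x.
  rewrite -(Gd v) -(size_map (wlcol init G t)).
  by apply/all_pred1P; rewrite all_map; apply/allP => u _; apply: IH.
have sorted_nseq m : sorted leq (nseq m x) by elim: m => [|[|m] IHm] //=; rewrite leqnn.
by rewrite (eqP (IH v)) sorted_sort //; apply: leq_trans.
Qed.

Lemma monochrome_enum init t x G :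
  monochrome init t x G -> [seq wlcol init G t v | v <- enum 'I_(gn G)] = nseq (gn G) x.
Proof.
move=> Gx; transitivity (nseq (size (enum 'I_(gn G))) x); last by rewrite size_enum_ord.
rewrite -(size_map (wlcol init G t)); apply/all_pred1P.
by rewrite all_map; apply/allP => v _; apply: (forallP Gx).
Qed.

Lemma cnt_monochrome init t x G : monochrome init t x G -> cnt init G t x = gn G.
Proof.
by move=> /forallP Gx; rewrite /cnt -[RHS]card_ord; apply: eq_card => v; rewrite inE Gx.
Qed.

Lemma cnt_monochrome_other init t x y G :
  monochrome init t y G -> x != y -> cnt init G t x = 0.
Proof.
move=> /forallP Gy xy; apply: eq_card0 => v.
by rewrite inE (eqP (Gy v)) eq_sym (negbTE xy).
Qed.

Lemma undup_nseqS (T : eqType) (x : T) m : undup (nseq m.+1 x) = [:: x].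
Proof.
elim: m => // m IHm; rewrite -[nseq _ _]/(x :: nseq m.+1 x).
have : x \in nseq m.+1 x by exact: mem_head.
by move: (nseq m.+1 x) IHm => s IHs /= ->.
Qed.

Lemma colors_monochrome init S t x :
  all (monochrome init t x) S -> has (fun G => 0 < gn G) S -> colors init S t = [:: x].
Proof.
move=> Sx S_gt0; rewrite /colors.
have -> : flatten [seq [seq wlcol init G t v | v <- enum 'I_(gn G)] | G <- S]
          = nseq (sumn [seq gn G | G <- S]) x.
  by elim: S Sx {S_gt0} => //= G S IH /andP[Gx /IH ->]; rewrite (monochrome_enum Gx) nseqD.
have : 0 < sumn [seq gn G | G <- S] by elim: S {Sx} S_gt0 => //= G S IH /orP[|/IH]; lia.
by case: (sumn _) => // m _; rewrite undup_nseqS.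
Qed.

Lemma phiT_monochrome (R : realType) init S T G (col : nat -> nat) :
  (forall t, all (monochrome init t (col t)) S) -> has (fun H => 0 < gn H) S ->
  (forall t, monochrome init t (col t) G) -> @phiT R init S T G = nseq T.+1 (gn G)%:R%R.
Proof.
move=> Scol S_gt0 Gcol; rewrite /phiT -[in RHS](size_iota 0 T.+1).
elim: (iota 0 T.+1) => //= t ts ->.
by rewrite /phi (colors_monochrome (Scol t) S_gt0) /= cnt_monochrome.
Qed.

Lemma iso_gn G H : iso G H -> gn G = gn H.
Proof. by case=> f [/bij_eq_card]; rewrite !card_ord. Qed.

Lemma wl_dist1_gn G H : gn G != gn H -> wl_dist1 G H.
Proof.
have mono0 K : monochrome init_WL 0 0 K by apply/forallP.
by move=> /eqP GH; exists 0, 0; split => //; rewrite !cnt_monochrome.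
Qed.

Lemma gn_nth_neq S G0 i j : uniq [seq gn G | G <- S] ->
  i < size S -> j < size S -> i != j -> gn (nth G0 S i) != gn (nth G0 S j).
Proof. by move=> S_uniq iS jS; rewrite -!(nth_map G0 0) // nth_uniq ?size_map. Qed.

Section LinearSeparability.
Variable R : realType.
Local Open Scope ring_scope.
Implicit Types (X : seq (seq R * bool)) (w u x : seq R) (k : R).

Lemma nseq_scale m k : nseq m k = [seq k * a | a <- nseq m 1].
Proof. by rewrite map_nseq mulr1. Qed.

Lemma dot_scale w k u : dot w [seq k * a | a <- u] = k * dot w u.
Proof.
rewrite /dot size_map mulr_sumr; apply: eq_bigr => i _.
by rewrite (nth_map 0) // mulrCA.
Qed.

Lemma enorm_scale k u : 0 < k -> enorm [seq k * a | a <- u] = k * enorm u.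
Proof.
move=> k_gt0; rewrite /enorm big_map.
under eq_bigr => a _ do rewrite exprMn.
by rewrite -mulr_sumr sqrtrM ?sqr_ge0 // sqrtr_sqr gtr0_norm.
Qed.

Lemma normalize_scale k u : 0 < k -> normalize [seq k * a | a <- u] = normalize u.
Proof.
move=> k_gt0; rewrite /normalize enorm_scale // -map_comp; apply: eq_map => a /=.
by rewrite invfM mulrACA mulfV ?gt_eqF // mul1r.
Qed.

Lemma enorm_cons_gt0 a x : a != 0 -> 0 < enorm (a :: x).
Proof.
move=> a_neq0; rewrite /enorm sqrtr_gt0 big_cons.
have a2_gt0 : 0 < a ^+ 2 by rewrite exprn_even_gt0.
have : 0 <= \sum_(b <- x) b ^+ 2 by apply: sumr_ge0 => b _; rewrite sqr_ge0.
lra.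
Qed.

Lemma dot_neg_head x : dot [:: -1] x = - x`_0.
Proof.
case: x => [|a x]; first by rewrite /dot big_ord0 oppr0.
rewrite /dot big_ord_recl big1 ?addr0 ?mulN1r // => i _.
by rewrite /= nth_nil mul0r.
Qed.

Lemma not_linsep_conflict X x : (x, true) \in X -> (x, false) \in X -> ~ linsep X.
Proof. by move=> xt xf [w [b sep]]; move: (sep _ xt) (sep _ xf) => /=; lra. Qed.

Lemma not_linsep_collinear X u k1 k2 k3 (b : bool) : k1 < k2 -> k2 < k3 ->
  ([seq k1 * a | a <- u], b) \in X -> ([seq k2 * a | a <- u], ~~ b) \in X ->
  ([seq k3 * a | a <- u], b) \in X -> ~ linsep X.
Proof.
move=> k12 k23 x1 x2 x3 [w [c sep]].
move: (sep _ x1) (sep _ x2) (sep _ x3) => {x1 x2 x3 sep} /=; rewrite !dot_scale.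
by case: b => /=; nra.
Qed.

Lemma linsep_head_threshold X (theta : R) :
  (forall p, p \in X -> if p.2 then p.1`_0 < theta else theta < p.1`_0) -> linsep X.
Proof.
move=> thr; exists [:: -1], theta => p /thr; rewrite dot_neg_head.
by case: p.2; lra.
Qed.

End LinearSeparability.

Definition clique_union n (block : 'I_n -> nat) : graph.
Proof.
refine (@Graph n (fun a b => (a != b) && (block a == block b)) _ _) => [a b | a].
  by rewrite eq_sym [block a == _]eq_sym.
by rewrite eqxx.
Defined.

Definition complete_bipartite n (side : 'I_n -> bool) : graph.
Proof.
refine (@Graph n (fun a b => side a != side b) _ _) => [a b | a].
  by rewrite eq_sym.
by rewrite eqxx.
Defined.

Definition K3 := clique_union (fun _ : 'I_3 => 0).
Definition C4 := complete_bipartite (fun a : 'I_4 => odd a).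
Definition twoK3 := clique_union (fun a : 'I_6 => a %/ 3).

Lemma regular_K3 : regular K3 2.
Proof. by rewrite /regular /nbrs !enum_ordSl enum_ord0 => -[[|[|[|]]]]. Qed.

Lemma regular_C4 : regular C4 2.
Proof. by rewrite /regular /nbrs !enum_ordSl enum_ord0 => -[[|[|[|[|]]]]]. Qed.

Lemma regular_twoK3 : regular twoK3 2.
Proof. by rewrite /regular /nbrs !enum_ordSl enum_ord0 => -[[|[|[|[|[|[|]]]]]]]. Qed.

Lemma ellF_self F v : ellF F F v.
Proof.
apply/existsP; exists [ffun a => a]; apply/and3P; split.
- by apply/injectiveP => a b; rewrite !ffunE.
- by apply/codomP; exists v; rewrite ffunE.
- by apply/forallP => a; apply/forallP => b; rewrite !ffunE.
Qed.

Lemma ellF_K3_complete_bipartite n (side : 'I_n -> bool) v :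
  ellF K3 (complete_bipartite side) v = false.
Proof.
apply/negbTE/existsP => -[f /and3P[_ _ /forallP f_adj]].
have adj (a b : 'I_3) : side (f a) != side (f b) = (a != b).
  by move/forallP/(_ b)/eqP: (f_adj a) => /= <-; rewrite andbT.
have side_inj : injective (side \o f).
  by move=> a b /= /eqP; apply: contraTeq; rewrite -adj.
by have := leq_card _ side_inj; rewrite card_bool card_ord.
Qed.

Lemma ellF_K3_twoK3 v : ellF K3 twoK3 v.
Proof.
case: v => m m_lt6.
pose g (a : 'I_3) : 'I_6 := inord (a + m %/ 3 * 3).
have g_val a : g a = a + m %/ 3 * 3 :> nat.
  by rewrite /g inordK //; have : a < 3 := ltn_ord a; move: m_lt6 => /=; lia.
apply/existsP; exists (finfun g); apply/and3P; split.
- apply/injectiveP => a b; rewrite !ffunE => /(congr1 val) /=.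
  by rewrite (g_val a) (g_val b) => /addIn/val_inj.
- apply/codomP; exists (inord (m %% 3)); rewrite ffunE; apply: val_inj => /=.
  by rewrite g_val inordK ?ltn_mod // addnC -divn_eq.
- apply/forallP => a; apply/forallP => b; rewrite !ffunE /= -!val_eqE /=.
  by rewrite (g_val a) (g_val b) eqn_add2r !divnDMl // eqn_add2r !divn_small.
Qed.

Definition has_triangle G := [exists v, ellF K3 G v].

Lemma has_triangle_K3 : has_triangle K3.
Proof. by apply/existsP; exists ord0; apply: ellF_self. Qed.

Lemma has_triangle_C4 : has_triangle C4 = false.
Proof. by apply/negbTE/existsP => -[v]; rewrite ellF_K3_complete_bipartite. Qed.

Lemma has_triangle_twoK3 : has_triangle twoK3.
Proof. by apply/existsP; exists ord0; apply: ellF_K3_twoK3. Qed.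

Definition Sgraphs := [:: K3; C4; twoK3].

Lemma phiT_WL (R : realType) T G : regular G 2 ->
  @phiT R init_WL Sgraphs T G = nseq T.+1 (gn G)%:R%R.
Proof.
have mono H t : regular H 2 -> monochrome init_WL t (regular_col 0 2 t) H.
  by move=> H2; apply: monochrome_regular.
move=> G2; apply: (@phiT_monochrome R _ _ T G (regular_col 0 2)) => // t; last exact: mono.
by rewrite /= (mono _ _ regular_K3) (mono _ _ regular_C4) (mono _ _ regular_twoK3).
Qed.

Definition col_tri := pickle [:: true].
Definition col_notri := pickle [:: false].

Lemma monochrome_WLF G (b : bool) :
  (forall v, ellF K3 G v = b) -> monochrome (init_WLF [:: K3]) 0 (pickle [:: b]) G.
Proof. by move=> Gb; apply/forallP => v; rewrite /= /init_WLF /= Gb. Qed.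

Lemma monochrome_WLF_K3 : monochrome (init_WLF [:: K3]) 0 col_tri K3.
Proof. exact/monochrome_WLF/ellF_self. Qed.

Lemma monochrome_WLF_C4 : monochrome (init_WLF [:: K3]) 0 col_notri C4.
Proof. exact/monochrome_WLF/ellF_K3_complete_bipartite. Qed.

Lemma monochrome_WLF_twoK3 : monochrome (init_WLF [:: K3]) 0 col_tri twoK3.
Proof. exact/monochrome_WLF/ellF_K3_twoK3. Qed.

Lemma colors_WLF : colors (init_WLF [:: K3]) Sgraphs 0 = [:: col_notri; col_tri].
Proof.
rewrite /colors /= (monochrome_enum monochrome_WLF_K3) (monochrome_enum monochrome_WLF_C4).
by rewrite (monochrome_enum monochrome_WLF_twoK3).
Qed.

Lemma phiT_WLF_cons (R : realType) T G : exists r,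
  @phiT R (init_WLF [:: K3]) Sgraphs T G = (cnt (init_WLF [:: K3]) G 0 col_notri)%:R%R :: r.
Proof. by rewrite /phiT /= /phi colors_WLF /=; eexists. Qed.

Lemma col_notri_neq_tri : col_notri != col_tri.
Proof. by rewrite (inj_eq (pcan_inj pickleK)). Qed.

Lemma cnt_notri_K3 : cnt (init_WLF [:: K3]) K3 0 col_notri = 0.
Proof. exact: cnt_monochrome_other monochrome_WLF_K3 col_notri_neq_tri. Qed.

Lemma cnt_notri_twoK3 : cnt (init_WLF [:: K3]) twoK3 0 col_notri = 0.
Proof. exact: cnt_monochrome_other monochrome_WLF_twoK3 col_notri_neq_tri. Qed.

Lemma cnt_notri_C4 : cnt (init_WLF [:: K3]) C4 0 col_notri = 4.
Proof. exact: cnt_monochrome monochrome_WLF_C4. Qed.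

Section SampleSeparability.
Variables (R : realType) (T : nat).
Local Open Scope ring_scope.

Lemma not_linsep_WL :
  ~ linsep (sample (fun G => @phiT R init_WL Sgraphs T G) Sgraphs has_triangle).
Proof.
rewrite /sample /= has_triangle_K3 has_triangle_C4 has_triangle_twoK3.
rewrite (phiT_WL _ _ regular_K3) (phiT_WL _ _ regular_C4) (phiT_WL _ _ regular_twoK3).
rewrite (nseq_scale _ (gn K3)%:R) (nseq_scale _ (gn C4)%:R) (nseq_scale _ (gn twoK3)%:R).
apply: (not_linsep_collinear (u := nseq T.+1 1) (k1 := (gn K3)%:R) (k2 := (gn C4)%:R)
                            (k3 := (gn twoK3)%:R) (b := true)); rewrite ?ltr_nat //.
- exact: mem_head.
- exact/mem_behead/mem_head.
- exact/mem_behead/mem_behead/mem_head.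
Qed.

Lemma not_linsep_WL_normalized :
  ~ linsep (sample (fun G => normalize (@phiT R init_WL Sgraphs T G)) Sgraphs has_triangle).
Proof.
rewrite /sample /= has_triangle_K3 has_triangle_C4.
rewrite (phiT_WL _ _ regular_K3) (phiT_WL _ _ regular_C4).
rewrite (nseq_scale _ (gn K3)%:R) (nseq_scale _ (gn C4)%:R).
rewrite !normalize_scale ?ltr0Sn //.
by apply: (@not_linsep_conflict _ _ (normalize (nseq T.+1 1))); rewrite !inE eqxx ?orbT.
Qed.

Lemma linsep_WLF :
  linsep (sample (fun G => @phiT R (init_WLF [:: K3]) Sgraphs T G) Sgraphs has_triangle).
Proof.
apply: (linsep_head_threshold (theta := 2)) => p.
rewrite /sample /= has_triangle_K3 has_triangle_C4 has_triangle_twoK3 !inE.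
case/or3P => /eqP -> /=.
- by have [r ->] := phiT_WLF_cons R T K3; rewrite cnt_notri_K3 ltr_nat.
- by have [r ->] := phiT_WLF_cons R T C4; rewrite cnt_notri_C4 ltr_nat.
- by have [r ->] := phiT_WLF_cons R T twoK3; rewrite cnt_notri_twoK3 ltr_nat.
Qed.

Lemma linsep_WLF_normalized :
  linsep (sample (fun G => normalize (@phiT R (init_WLF [:: K3]) Sgraphs T G))
                 Sgraphs has_triangle).
Proof.
have [rC4 phiC4] := phiT_WLF_cons R T C4.
set y := (normalize (@phiT R (init_WLF [:: K3]) Sgraphs T C4))`_0.
have y_gt0 : 0 < y.
  by rewrite /y phiC4 /= cnt_notri_C4 divr_gt0 ?ltr0n // enorm_cons_gt0 ?pnatr_eq0.
apply: (linsep_head_threshold (theta := y / 2)) => p.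
rewrite /sample /= has_triangle_K3 has_triangle_C4 has_triangle_twoK3 !inE.
case/or3P => /eqP -> /=.
- by have [r ->] := phiT_WLF_cons R T K3; rewrite /= cnt_notri_K3 mul0r; lra.
- by rewrite -/y; lra.
- by have [r ->] := phiT_WLF_cons R T twoK3; rewrite /= cnt_notri_twoK3 mul0r; lra.
Qed.

End SampleSeparability.

Theorem proposition12 (R : realType) (n : nat) : (10 <= n)%N ->
  exists (S : seq graph) (c : graph -> bool) (F : graph),
    (forall i, (i < size S)%N -> (gn (nth F S i) <= n)%N) /\
    (forall i j, (i < size S)%N -> (j < size S)%N -> i <> j ->
        ~ iso (nth F S i) (nth F S j)) /\
    (forall i j, (i < size S)%N -> (j < size S)%N -> i <> j ->
        wl_dist1 (nth F S i) (nth F S j)) /\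
    (forall T : nat,
        ~ linsep (sample (fun G => normalize (@phiT R init_WL S T G)) S c) /\
        linsep (sample (fun G => normalize (@phiT R (init_WLF [:: F]) S T G)) S c) /\
        ~ linsep (sample (fun G => @phiT R init_WL S T G) S c) /\
        linsep (sample (fun G => @phiT R (init_WLF [:: F]) S T G) S c)).
Proof.
move=> n_ge10; exists Sgraphs, has_triangle, K3.
have gn_neq i j : i < 3 -> j < 3 -> i <> j -> gn (nth K3 Sgraphs i) != gn (nth K3 Sgraphs j).
  by move=> iS jS /eqP; apply: gn_nth_neq.
split; [|split; [|split]].
- by case=> [|[|[|i]]] //= _; lia.
- by move=> i j iS jS ij /iso_gn/eqP; apply/negP/gn_neq.
- by move=> i j iS jS ij; apply/wl_dist1_gn/gn_neq.
- move=> T; split; [|split; [|split]].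
  + exact: not_linsep_WL_normalized.
  + exact: linsep_WLF_normalized.
  + exact: not_linsep_WL.
  + exact: linsep_WLF.
Qed.
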